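(* Let $f_A(x)=1-\dfrac{1}{\sum_{n\ge0}n!\,x^n}$. For all $n\ge1$ and $k\ge0$, the number of permutations $w\in\mathfrak S_n$ with $|C(w)|=k$ equals the coefficient of $x^nt^k$ in $\dfrac{f_A(x)}{1-t\,f_A(x)}$.
   Context: $\mathfrak S_n$ is the Coxeter group with generators $\tau_i=(i,i+1)$, $1\le i\le n-1$. For $w\in\mathfrak S_n$, $C(w)$ is the set of $\tau_i$ that do not appear in a (any) reduced expression of $w$; equivalently $C(w)=\{\tau_i: w(j)<w(k)\text{ for all }1\le j\le i<k\le n\}$. Generating functions are formal power series. *)

From HB Require Import structures.
From mathcomp Require Import all_boot all_order all_algebra all_fingroup.
Set Implicit Arguments. Unset Strict Implicit. Unset Printing Implicit Defensive.
Import Order.TTheory GRing.Theory Num.Theory.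
Local Open Scope ring_scope.

Definition fps (R : Type) := nat -> R.

Section FPS.
Variable R : unitRingType.

Definition fps_one : fps R := fun n => (n == 0%N)%:R.
Definition fps_sub (f g : fps R) : fps R := fun n => f n - g n.
Definition fps_mul (f g : fps R) : fps R :=
  fun n => \sum_(i < n.+1) f i * g (n - i)%N.

(* first n+1 coefficients of the inverse of f (f 0 assumed invertible):
   g_0 = (f_0)^-1,  g_m = - (f_0)^-1 * sum_{i=1}^m f_i g_{m-i}. *)
Fixpoint fps_inv_seq (f : fps R) (n : nat) : seq R :=
  match n with
  | 0%N => [:: (f 0%N)^-1]
  | m.+1 => let s := fps_inv_seq f m in
            rcons s (- (f 0%N)^-1 *
                     \sum_(i < m.+1) f i.+1 * nth 0 s (m - i)%N)
  end.

Definition fps_inv (f : fps R) : fps R := fun n => nth 0 (fps_inv_seq f n) n.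
End FPS.

(** Bivariate series in x and t, as series in t whose coefficients are
    series in x: (B k) n = coefficient of x^n t^k. *)
Definition bfps := nat -> fps rat.

Definition bfps_mul (F G : bfps) : bfps :=
  fun k n => \sum_(j < k.+1) fps_mul (F j) (G (k - j)%N) n.

Fixpoint bfps_inv_seq (F : bfps) (k : nat) : seq (fps rat) :=
  match k with
  | 0%N => [:: fps_inv (F 0%N)]
  | m.+1 => let s := bfps_inv_seq F m in
            rcons s (fps_mul (fps_inv (F 0%N))
                      (fun n => - \sum_(i < m.+1)
                         fps_mul (F i.+1) (nth (fun _ => 0) s (m - i)%N) n))
  end.

Definition bfps_inv (F : bfps) : bfps :=
  fun k => nth (fun _ => 0) (bfps_inv_seq F k) k.

Definition bconst (f : fps rat) : bfps := fun k => if k == 0%N then f else (fun _ => 0).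

Definition factorial_series : fps rat := fun n => (n`!)%:R.

Definition fA : fps rat := fps_sub (fps_one rat) (fps_inv factorial_series).

Definition one_minus_t_fA : bfps :=
  fun k => if k == 0%N then fps_one rat
           else if k == 1%N then fps_sub (fun _ => 0) fA else (fun _ => 0).

Definition gen_fun : bfps := bfps_mul (bconst fA) (bfps_inv one_minus_t_fA).

(** C(w): with positions 0-indexed (position p <-> p+1), the generator
    tau_i (1 <= i <= n-1) is identified with i : 'I_n, i > 0, and
    tau_i \in C(w) iff w(j) < w(k) for all j <= i < k (1-indexed),
    i.e. w p < w q for all 0-indexed p < i <= q. *)
Definition Cset (n : nat) (w : 'S_n) : {set 'I_n} :=
  [set i : 'I_n | (0 < i)%N &&
     [forall p : 'I_n, forall q : 'I_n,
        ((p < i)%N && (i <= q)%N) ==> (w p < w q)%N]].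

From HB Require Import structures.
From mathcomp Require Import all_boot all_order all_algebra all_fingroup.
From mathcomp Require Import zify.
Set Implicit Arguments. Unset Strict Implicit. Unset Printing Implicit Defensive.
Import GRing.Theory.

(* An element i of C(w) splits w as a direct sum u (+) v of a permutation u of
   {1..i} and a permutation v of {i+1..n}, and C(u (+) v) consists of C(u), i
   and the shift of C(v).  Splitting at the least element of C(w) writes w
   uniquely as u (+) v with C(u) empty and |C(w)| = 1 + |C(v)|.  So if a(x) and
   c_k(x) count (for n >= 1) the indecomposable permutations and those with
   |C(w)| = k, then c_(k+1) = a c_k, c_0 = a, and counting all permutations
   gives sum n! x^n = 1/(1 - a).  Hence f_A = a, c_k = f_A^(k+1), and
   f_A/(1 - t f_A) = sum_k t^k f_A^(k+1). *)

Lemma CsetP n (w : 'S_n) (x : 'I_n) :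
  reflect (0 < x /\ forall p q : 'I_n, p < x <= q -> w p < w q) (x \in Cset w).
Proof.
rewrite inE; apply: (iffP andP) => -[x0 H]; split=> //.
- by move=> p q hpq; exact: (implyP (forallP (forallP H p) q)).
- by apply/forallP => p; apply/forallP => q; apply/implyP; exact: H.
Qed.

Section DirectSum.
Variables i m : nat.
Implicit Types (u : 'S_i) (v : 'S_m).

Definition dsum_fun u v (x : 'I_(i + m)) : 'I_(i + m) :=
  match split x with inl a => lshift m (u a) | inr b => rshift i (v b) end.

Lemma dsum_fun_inj u v : injective (dsum_fun u v).
Proof.
rewrite /dsum_fun => x y.
by case: split_ordP => a ->; case: split_ordP => b -> /eqP;
  rewrite eq_shift // => /eqP/perm_inj ->.
Qed.

Definition dsum u v : 'S_(i + m) := perm (@dsum_fun_inj u v).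

Lemma dsum_lshift u v a : dsum u v (lshift m a) = lshift m (u a).
Proof. by rewrite permE /dsum_fun (unsplitK (inl a)). Qed.

Lemma dsum_rshift u v b : dsum u v (rshift i b) = rshift i (v b).
Proof. by rewrite permE /dsum_fun (unsplitK (inr b)). Qed.

Lemma dsum_inj : injective (fun uv : 'S_i * 'S_m => dsum uv.1 uv.2).
Proof.
move=> [u v] [u' v'] /= E; congr pair; apply/permP => x.
- by apply: (@lshift_inj _ m); rewrite -(dsum_lshift u v) -(dsum_lshift u' v') E.
- by apply: (@rshift_inj i); rewrite -(dsum_rshift u v) -(dsum_rshift u' v') E.
Qed.

Lemma Cset_dsum_lshift u v a : (lshift m a \in Cset (dsum u v)) = (a \in Cset u).
Proof.
apply/CsetP/CsetP => -[a0 H]; split=> // p q.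
  by move=> hpq; have := H (lshift m p) (lshift m q); rewrite !dsum_lshift; exact.
case: (split_ordP p) => p' ->; case: (split_ordP q) => q' -> /=;
  rewrite ?dsum_lshift ?dsum_rshift /= => hpq.
- exact: H.
- by have := ltn_ord (u p'); lia.
- by have := ltn_ord a; lia.
- by have := ltn_ord a; lia.
Qed.

Lemma Cset_dsum_rshift u v b :
  (rshift i b \in Cset (dsum u v)) = if b == 0 :> nat then 0 < i else b \in Cset v.
Proof.
case: eqP => [b0|/eqP b0]; last rewrite -lt0n in b0.
- apply/CsetP/idP => [[]|i0]; first by rewrite /= b0 addn0.
  rewrite /= b0 addn0; split=> // p q.
  case: (split_ordP p) => p' ->; case: (split_ordP q) => q' -> /=;
    rewrite ?dsum_lshift ?dsum_rshift /= => hpq.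
  + by have := ltn_ord q'; lia.
  + by have := ltn_ord (u p'); lia.
  + lia.
  + lia.
- apply/CsetP/CsetP => -[_ H]; (split; first by rewrite /= ?addn_gt0 b0 ?orbT) => p q.
    move=> hpq; have := H (rshift i p) (rshift i q); rewrite !dsum_rshift /=; lia.
  case: (split_ordP p) => p' ->; case: (split_ordP q) => q' -> /=;
    rewrite ?dsum_lshift ?dsum_rshift /= => hpq.
  + by have := ltn_ord q'; lia.
  + by have := ltn_ord (u p'); lia.
  + by have := ltn_ord q'; lia.
  + by have := H p' q'; lia.
Qed.

End DirectSum.

Lemma inj_bounded_leq k (f : 'I_k -> nat) lo hi :
  injective f -> (forall b, lo <= f b < hi) -> k <= hi - lo.
Proof.
move=> f_inj f_bnd.
have sub : {subset map f (enum 'I_k) <= iota lo (hi - lo)}.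
  by move=> y /mapP [b _ ->]; rewrite mem_iota; have := f_bnd b; lia.
have := uniq_leq_size _ sub; rewrite size_map size_enum_ord size_iota; apply.
by rewrite map_inj_uniq ?enum_uniq.
Qed.

Lemma cut_is_dsum i m (w : 'S_(i + m)) :
  (forall p q : 'I_(i + m), p < i <= q -> w p < w q) ->
  exists u v, w = dsum u v.
Proof.
move=> cut.
have wl_inj : injective (fun a : 'I_i => val (w (lshift m a))).
  by move=> a a' /val_inj/perm_inj/lshift_inj.
have wr_inj : injective (fun b : 'I_m => val (w (rshift i b))).
  by move=> b b' /val_inj/perm_inj/rshift_inj.
have wl_lt a : w (lshift m a) < i.
  have bnd b : (w (lshift m a)).+1 <= w (rshift i b) < i + m.
    by rewrite ltn_ord andbT; apply: cut; rewrite /= ltn_ord leq_addr.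
  by have := ltn_ord (w (lshift m a)); have := inj_bounded_leq wr_inj bnd; lia.
have wr_ge b : i <= w (rshift i b).
  rewrite -[X in _ <= X]subn0; apply: (inj_bounded_leq wl_inj) => a.
  by apply: cut; rewrite /= ltn_ord leq_addr.
have wr_lt b : w (rshift i b) - i < m.
  by have := ltn_ord (w (rshift i b)); have := wr_ge b; lia.
have u_inj : injective (fun a => Ordinal (wl_lt a)).
  by move=> a a' [] /val_inj/perm_inj/lshift_inj.
have v_inj : injective (fun b => Ordinal (wr_lt b)).
  move=> b b' [] E; apply: wr_inj => /=.
  by have := wr_ge b; have := wr_ge b'; lia.
exists (perm u_inj), (perm v_inj); apply/permP => x.
case: (split_ordP x) => [a|b] ->; rewrite ?dsum_lshift ?dsum_rshift permE;
  apply: val_inj => //=.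
by have := wr_ge b; lia.
Qed.

Definition is_cut n (w : 'S_n) (j : nat) : bool := [exists x in Cset w, x == j :> nat].

(* [first_cut w = n] when [w] has no cut. *)
Definition first_cut n (w : 'S_n) : nat := find (is_cut w) (iota 0 n).

Section FirstCut.
Variables (n : nat) (w : 'S_n).

Lemma is_cut0 : is_cut w 0 = false.
Proof.
by apply/existsP => -[x /andP [/CsetP [x0 _] /eqP x_eq0]]; rewrite x_eq0 in x0.
Qed.

Lemma first_cut_le : first_cut w <= n.
Proof. by have := find_size (is_cut w) (iota 0 n); rewrite size_iota. Qed.

Lemma has_cut : has (is_cut w) (iota 0 n) = (first_cut w < n).
Proof. by rewrite has_find size_iota. Qed.

Lemma first_cut_ltn j : j < n ->
  (first_cut w == j) = is_cut w j && [forall l : 'I_j, ~~ is_cut w l].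
Proof.
move=> jn; have nth_iota0 l : l < n -> nth 0 (iota 0 n) l = l.
  by move=> ?; rewrite nth_iota.
apply/eqP/andP => [fc_j|[cut_j no_cut]].
- have cut_exists : has (is_cut w) (iota 0 n) by rewrite has_cut fc_j.
  split.
    by have := nth_find 0 cut_exists; rewrite -/(first_cut w) fc_j nth_iota0.
  apply/forallP => l; have := @before_find _ 0 (is_cut w) (iota 0 n) l.
  by rewrite -/(first_cut w) fc_j ltn_ord nth_iota0 // => [->|]; have := ltn_ord l; lia.
- have [lt_fc|gt_fc|//] := ltngtP (first_cut w) j.
  + have cut_exists : has (is_cut w) (iota 0 n) by rewrite has_cut; lia.
    have := nth_find 0 cut_exists; rewrite -/(first_cut w) nth_iota0; last by lia.
    by rewrite (negbTE (forallP no_cut (Ordinal lt_fc))).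
  + by have := before_find 0 gt_fc; rewrite nth_iota0 // cut_j.
Qed.

Lemma first_cut_eqn : (first_cut w == n) = (Cset w == set0).
Proof.
rewrite eqn_leq first_cut_le /= leqNgt -has_cut; apply/negP/eqP => [no_cut|C0].
- apply/setP => x; rewrite in_set0; apply/negP => x_cut; apply: no_cut.
  apply/hasP; exists (nat_of_ord x); first by rewrite mem_iota ltn_ord.
  by apply/existsP; exists x; rewrite x_cut /=.
- by case/hasP => j _ /existsP [x]; rewrite C0 inE.
Qed.

End FirstCut.

Section CutsOfDirectSum.
Variables (i m : nat) (u : 'S_i) (v : 'S_m).

Lemma is_cut_dsum_lshift (a : 'I_i) : is_cut (dsum u v) a = (a \in Cset u).
Proof.
apply/existsP/idP => [[x /andP []]|a_cut].
  case: (split_ordP x) => [a'|b] -> /=.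
    by rewrite Cset_dsum_lshift => ? /eqP/val_inj <-.
  by move=> _ /eqP; have := ltn_ord a; lia.
by exists (lshift m a); rewrite Cset_dsum_lshift a_cut /=.
Qed.

Lemma is_cut_dsum_mid : 0 < i -> 0 < m -> is_cut (dsum u v) i.
Proof.
move=> i0 m0; apply/existsP; exists (rshift i (Ordinal m0)).
by rewrite Cset_dsum_rshift /= i0 addn0 eqxx.
Qed.

Lemma card_Cset_dsum : 0 < i -> 0 < m -> #|Cset (dsum u v)| = #|Cset u| + #|Cset v|.+1.
Proof.
move=> i0; case: m v => // m' v' _.
rewrite -!sum1_card big_mkcond big_split_ord /=; congr addn.
  by rewrite [RHS]big_mkcond; apply: eq_bigr => a _; rewrite Cset_dsum_lshift.
rewrite big_ord_recl Cset_dsum_rshift /= i0 add1n; congr S.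
rewrite [RHS]big_mkcond big_ord_recl /=.
have -> : (ord0 \in Cset v') = false by apply/CsetP => -[].
by rewrite add0n; apply: eq_bigr => b _; rewrite Cset_dsum_rshift.
Qed.

End CutsOfDirectSum.

Definition perm_count n (R : pred nat) : nat := #|[set w : 'S_n | R #|Cset w|]|.

Definition nindec n : nat := perm_count n (pred1 0).

Lemma card_first_cut_dsum i m (R : pred nat) : 0 < i -> 0 < m ->
  #|[set w : 'S_(i + m) | (first_cut w == i) && R #|Cset w|]|
  = nindec i * perm_count m (fun k => R k.+1).
Proof.
move=> i0 m0.
suff -> : [set w : 'S_(i + m) | (first_cut w == i) && R #|Cset w|] =
    (fun uv : 'S_i * 'S_m => dsum uv.1 uv.2) @:
      setX [set u : 'S_i | #|Cset u| == 0] [set v : 'S_m | R #|Cset v|.+1].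
  by rewrite card_imset ?cardsX //; exact: dsum_inj.
have lt_i : i < i + m by rewrite -{1}[i]addn0 ltn_add2l.
apply/setP => w; rewrite inE (first_cut_ltn _ lt_i); apply/andP/imsetP.
- move=> [/andP [/existsP [x /andP [/CsetP [_ x_cut] /eqP x_i]] no_cut] R_w].
  have [u [v w_uv]] : exists u v, w = dsum u v.
    by apply: cut_is_dsum => p q cut_pq; apply: x_cut; rewrite x_i.
  have Cu0 : Cset u = set0.
    apply/setP => a; rewrite in_set0 -(is_cut_dsum_lshift u v) -w_uv.
    exact: negbTE (forallP no_cut a).
  exists (u, v) => //; rewrite !inE /= Cu0 cards0 eqxx.
  by rewrite w_uv card_Cset_dsum // Cu0 cards0 in R_w.
- move=> [[u v]]; rewrite !inE /= => /andP [/eqP/cards0_eq Cu0 R_v] ->.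
  rewrite card_Cset_dsum // Cu0 cards0 R_v is_cut_dsum_mid //; split=> //.
  by apply/forallP => a; rewrite is_cut_dsum_lshift Cu0 in_set0.
Qed.

Lemma perm_count_first_cut n (R : pred nat) :
    perm_count n R
  = \sum_(0 <= j < n.+1) #|[set w : 'S_n | (first_cut w == j) && R #|Cset w|]|.
Proof.
rewrite big_mkord /perm_count -sum1_card.
rewrite (partition_big (fun w => inord (first_cut w) : 'I_n.+1) xpredT) //=.
apply: eq_bigr => j _; rewrite -sum1_card; apply: eq_bigl => w.
rewrite !inE andbC; congr andb.
by rewrite -(inj_eq val_inj) /= inordK // ltnS first_cut_le.
Qed.

Lemma perm_count_rec n (R : pred nat) : 0 < n ->
  perm_count n R
  = R 0 * nindec n + \sum_(1 <= i < n) nindec i * perm_count (n - i) (fun k => R k.+1).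
Proof.
move=> n0; rewrite perm_count_first_cut big_nat_recr //= big_ltn //= addnC.
have -> : [set w : 'S_n | (first_cut w == 0) && R #|Cset w|] = set0.
  by apply/setP => w; rewrite !inE first_cut_ltn // is_cut0.
rewrite cards0 add0n; congr addn.
  have -> : [set w : 'S_n | (first_cut w == n) && R #|Cset w|]
            = [set w | R 0 & #|Cset w| == 0].
    apply/setP => w; rewrite !inE first_cut_eqn -cards_eq0 andbC.
    by case: eqP => [->|]; rewrite ?andbF.
  rewrite /nindec /perm_count; case: (R 0); rewrite ?mul1n ?mul0n.
    by apply: eq_card => w; rewrite !inE.
  by apply/eqP; rewrite cards_eq0; apply/eqP/setP => w; rewrite !inE.
apply: eq_big_nat => i /andP [i0 lt_in].
have [m n_im] : exists m, n = i + m by exists (n - i); rewrite subnKC // ltnW.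
move: lt_in; rewrite n_im addKn -{1}[i]addn0 ltn_add2l => m0.
exact: card_first_cut_dsum.
Qed.

Lemma perm_count_predT n : perm_count n predT = n`!.
Proof. by rewrite /perm_count -card_Sn; apply: eq_card => w; rewrite inE. Qed.

Lemma fact_rec n : 0 < n -> n`! = \sum_(1 <= i < n.+1) nindec i * (n - i)`!.
Proof.
move=> n0; rewrite -perm_count_predT perm_count_rec // big_nat_recr //= addnC.
rewrite subnn mul1n fact0 muln1; congr addn.
by apply: eq_bigr => i _; rewrite perm_count_predT.
Qed.

Lemma perm_count_succ n k : 0 < n ->
  perm_count n (pred1 k.+1) = \sum_(1 <= i < n) nindec i * perm_count (n - i) (pred1 k).
Proof. by move=> n0; rewrite perm_count_rec. Qed.

Local Open Scope ring_scope.

Section SeriesTheory.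
Variable R : unitRingType.
Implicit Types f g : fps R.

Lemma eq_fps_mul f f' g g' : f =1 f' -> g =1 g' -> fps_mul f g =1 fps_mul f' g'.
Proof. by move=> ff' gg' n; apply: eq_bigr => i _; rewrite ff' gg'. Qed.

Lemma fps_mulE f g n : fps_mul f g n = \sum_(0 <= i < n.+1) f i * g (n - i)%N.
Proof. by rewrite big_mkord. Qed.

Lemma fps_mul1 g : fps_mul (fps_one R) g =1 g.
Proof.
move=> n; rewrite /fps_mul big_ord_recl /= mul1r subn0 big1 ?addr0 // => i _.
by rewrite /fps_one /= mul0r.
Qed.

Lemma fps_mulr1 g : fps_mul g (fps_one R) =1 g.
Proof.
move=> n; rewrite /fps_mul big_ord_recr /= subnn mulr1 big1 ?add0r // => i _.
by rewrite /fps_one subn_eq0 leqNgt ltn_ord mulr0.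
Qed.

Lemma fps_mul0 g : fps_mul (fun _ => 0) g =1 (fun _ => 0).
Proof. by move=> n; rewrite /fps_mul big1 // => i _; rewrite mul0r. Qed.

Lemma size_fps_inv_seq f n : size (fps_inv_seq f n) = n.+1.
Proof. by elim: n => //= n IHn; rewrite size_rcons IHn. Qed.

Lemma nth_fps_inv_seq f n j : (j <= n)%N -> nth 0 (fps_inv_seq f n) j = fps_inv f j.
Proof.
elim: n => [|n IHn]; first by rewrite leqn0 => /eqP ->.
rewrite leq_eqVlt => /orP [/eqP -> //|lt_jn].
by rewrite /= nth_rcons size_fps_inv_seq lt_jn IHn.
Qed.

Lemma fps_inv_unique f g : f 0%N = 1 -> g 0%N = 1 ->
  (forall n, (0 < n)%N -> fps_mul f g n = 0) -> fps_inv f =1 g.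
Proof.
move=> f0 g0 fg1 n; elim/ltn_ind: n => -[_|n IHn]; first by rewrite /fps_inv /= f0 invr1.
rewrite /fps_inv /= nth_rcons size_fps_inv_seq ltnn eqxx f0 invr1 mulN1r.
have /eqP := fg1 n.+1 isT.
rewrite /fps_mul big_ord_recl f0 mul1r subn0 addr_eq0 => /eqP ->.
congr (- _); apply: eq_bigr => i _.
by rewrite lift0 subSS nth_fps_inv_seq ?leq_subr // IHn // ltnS leq_subr.
Qed.

Lemma fps_inv1 : fps_inv (fps_one R) =1 fps_one R.
Proof.
apply: fps_inv_unique => [||n n0]; rewrite ?fps_mul1 /fps_one ?eqxx //.
by rewrite eqn0Ngt n0.
Qed.

Fixpoint fps_pow f k : fps R :=
  if k is k'.+1 then fps_mul f (fps_pow f k') else fps_one R.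

End SeriesTheory.

Lemma fps_mulC (R : comUnitRingType) (f g : fps R) : fps_mul f g =1 fps_mul g f.
Proof.
move=> n; rewrite /fps_mul (reindex_inj rev_ord_inj) /=; apply: eq_bigr => i _.
by rewrite subSS subKn 1?mulrC // -ltnS.
Qed.

Lemma size_bfps_inv_seq (F : bfps) k : size (bfps_inv_seq F k) = k.+1.
Proof. by elim: k => //= k IHk; rewrite size_rcons IHk. Qed.

Lemma nth_bfps_inv_seq (F : bfps) k j : (j <= k)%N ->
  nth (fun _ => 0) (bfps_inv_seq F k) j = bfps_inv F j.
Proof.
elim: k => [|k IHk]; first by rewrite leqn0 => /eqP ->.
rewrite leq_eqVlt => /orP [/eqP -> //|lt_jk].
by rewrite /= nth_rcons size_bfps_inv_seq lt_jk IHk.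
Qed.

Lemma bfps_inv_one_minus_t_fA k : bfps_inv one_minus_t_fA k =1 fps_pow fA k.
Proof.
elim: k => [|k IHk] n; first exact: fps_inv1.
rewrite /bfps_inv /= nth_rcons size_bfps_inv_seq ltnn eqxx.
rewrite (eq_fps_mul (@fps_inv1 _) (frefl _)) fps_mul1.
rewrite big_ord_recl big1 ?addr0 => [|i _]; last by rewrite lift0 fps_mul0.
rewrite subn0 nth_bfps_inv_seq // /fps_mul -sumrN; apply: eq_bigr => i _.
by rewrite /one_minus_t_fA /fps_sub IHk /= sub0r mulNr opprK.
Qed.

Lemma gen_fun_pow k : gen_fun k =1 fps_pow fA k.+1.
Proof.
move=> n; rewrite /gen_fun /bfps_mul big_ord_recl big1 ?addr0 => [|i _]; last first.
  by rewrite lift0 /bconst fps_mul0.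
by rewrite subn0; apply: eq_fps_mul => // j; rewrite bfps_inv_one_minus_t_fA.
Qed.

Definition cut_series k : fps rat :=
  fun n => if n == 0%N then 0 else (perm_count n (pred1 k))%:R.

Lemma fps_inv_factorial :
  fps_inv factorial_series =1 fps_sub (fps_one rat) (cut_series 0).
Proof.
apply: fps_inv_unique; rewrite /fps_sub /fps_one /cut_series ?subr0 // => n n0.
rewrite fps_mulC /fps_mul big_ord_recl subn0 subr0 mul1r /factorial_series.
rewrite (fact_rec n0) big_add1 big_mkord natr_sum -big_split big1 // => i _.
by rewrite lift0 /= sub0r mulNr natrM subrr.
Qed.

Lemma fA_cut_series : fA =1 cut_series 0.
Proof.
by move=> n; rewrite /fA /fps_sub fps_inv_factorial /fps_sub opprB addrCA subrr addr0.
Qed.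

Lemma cut_series_succ k : cut_series k.+1 =1 fps_mul (cut_series 0) (cut_series k).
Proof.
move=> [|n]; first by rewrite /fps_mul big_ord1 /cut_series mul0r.
rewrite fps_mulE big_ltn // big_nat_recr //= subnn /cut_series /= mul0r mulr0 add0r addr0.
rewrite perm_count_succ // natr_sum; apply: eq_big_nat => i /andP [i0 lt_in].
by rewrite eqn0Ngt i0 subn_eq0 leqNgt lt_in natrM.
Qed.

Lemma fps_pow_fA k : fps_pow fA k.+1 =1 cut_series k.
Proof.
elim: k => [|k IHk] n /=; first by rewrite fps_mulr1 fA_cut_series.
by rewrite cut_series_succ; exact: eq_fps_mul fA_cut_series IHk n.
Qed.

Theorem mainTheorem14 (n k : nat) (hn : (1 <= n)%N) :
  (#|[set w : 'S_n | #|Cset w| == k]|)%:R = gen_fun k n :> rat.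
Proof. by rewrite gen_fun_pow fps_pow_fA /cut_series eqn0Ngt hn. Qed.
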